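(* Let $H$ be a finite group, $F$ a free group of rank $2$, $G=H\times F$, and let $A$ be a finite group of automorphisms of $G$ acting trivially on $F$, i.e. each $a\in A$ has the form $a(h,f)=(\alpha(h),f)$ for some automorphism $\alpha$ of $H$; put $n=|A|$. Then for every $z\in X$ in the $n$-valued coset group $X=(G,A)$ and every $y\in X$, the growth function $\xi_y(r)$ of the dynamic $T_z$ does not have exponential growth. In particular, for $H=\langle h\rangle$ cyclic of order $3$ and $A=\langle a\rangle$ with $a(h^i,f)=(h^{-i},f)$, the $2$-valued dynamic $T_z$ with $z=\pi((h,e))$ does not have exponential growth.
   Context: Coset group: for a group $G$ and finite $A\le\operatorname{Aut}(G)$ with $|A|=n$, $X=G/A$ is the set of $A$-orbits, $\pi:G\to X$ the projection, with $\pi(g)*\pi(h)=[\pi(g\,a(h)):a\in A]$, extended elementwise to multi-sets. The dynamic is $T_z(y)=y*z$ with iterates $T_z^r(y)=y*z*\dots*z$ ($r$ factors $z$); its growth function at $y$ is $\xi_y(r)=|\operatorname{Set}(T_z^r(y))|$, where $\operatorname{Set}$ gives the set of distinct elements of a multi-set. A function $f$ has exponential growth if $f(r)\ge c^r$ for some $c>1$ and all sufficiently large $r$. *)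

From HB Require Import structures.
From mathcomp Require Import all_boot all_order all_algebra all_fingroup.
From mathcomp Require Import reals.
Set Implicit Arguments. Unset Strict Implicit. Unset Printing Implicit Defensive.
Import GRing.Theory Num.Theory.

(* A letter is (generator index, inverted?) ; generators x_0, x_1. *)
Definition letter := ('I_2 * bool)%type.
Definition linv (l : letter) : letter := (l.1, ~~ l.2).

Definition wstep (l : letter) (w : seq letter) : seq letter :=
  if w is l' :: w' then (if l' == linv l then w' else l :: w) else [:: l].
Definition wmul (w1 w2 : seq letter) : seq letter := foldr wstep w2 w1.

Fixpoint reduced (w : seq letter) : bool :=
  match w with
  | l :: ((l' :: _) as w') => (l' != linv l) && reduced w'
  | _ => true
  end.

Lemma wstep_reduced l w : reduced w -> reduced (wstep l w).
Proof.
case: w => [|l' w'] //=.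
case: ifP => [_|/negbT ne].
  by case: w' => // l'' w'' /= /andP [].
by move=> H; rewrite /= ne H.
Qed.

Lemma wmul_reduced w1 w2 : reduced w2 -> reduced (wmul w1 w2).
Proof. by elim: w1 => //= l w1 IH H; apply: wstep_reduced; apply: IH. Qed.

Record Fw := FW { fword : seq letter; fwordP : reduced fword }.
HB.instance Definition _ := [isSub for fword].
HB.instance Definition _ := [Equality of Fw by <:].

Definition Fmul (x y : Fw) : Fw := FW (wmul_reduced (fword x) (fwordP y)).
Definition Fone : Fw := @FW [::] isT.

Definition GG (gT : finGroupType) := (gT * Fw)%type.
Definition mulG (gT : finGroupType) (g h : GG gT) : GG gT :=
  ((g.1 * h.1)%g, Fmul g.2 h.2).

(* A is a finite group of automorphisms of G acting trivially on F: it is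
   given by a subgroup of Aut(H); a in A acts by a(h,f) = (a h, f). *)
Definition actG (gT : finGroupType) (a : {perm gT}) (g : GG gT) : GG gT :=
  (a g.1, g.2).

(* X = G/A.  The A-orbit of (h,f) is {(a h, f) | a in A}; we represent it
   canonically by the pair (orbit of h under A, f). *)
Definition XX (gT : finGroupType) := ({set gT} * Fw)%type.
Definition piX (gT : finGroupType) (A : {group {perm gT}}) (g : GG gT) : XX gT :=
  (orbit 'P A g.1, g.2).
Definition repX (gT : finGroupType) (x : XX gT) : GG gT := (repr x.1, x.2).

(* pi(g) * pi(h) = [ pi(g a(h)) : a in A ]  (an n-element multiset, n = |A|) *)
Definition starX (gT : finGroupType) (A : {group {perm gT}}) (x y : XX gT)
  : seq (XX gT) :=
  [seq piX A (mulG (repX x) (actG a (repX y))) | a <- enum A].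

Definition Tz (gT : finGroupType) (A : {group {perm gT}}) (z : XX gT)
  (M : seq (XX gT)) : seq (XX gT) :=
  flatten [seq starX A m z | m <- M].

Definition Tzr (gT : finGroupType) (A : {group {perm gT}}) (z : XX gT)
  (r : nat) (y : XX gT) : seq (XX gT) := iter r (Tz A z) [:: y].

Definition xi (gT : finGroupType) (A : {group {perm gT}}) (z y : XX gT)
  (r : nat) : nat := size (undup (Tzr A z r y)).

Definition exp_growth (R : realType) (f : nat -> nat) : Prop :=
  exists c : R, (1 < c)%R /\ exists N : nat, forall r : nat, (N <= r)%N ->
    (c ^+ r <= (f r)%:R)%R.

Definition Z3 := 'I_3.
Definition inv3 : {perm Z3} := perm (@invg_inj Z3).
Definition A3 : {group {perm Z3}} := <[inv3]>%G.
Definition h3 : Z3 := Ordinal (isT : (1 < 3)%N).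

(* Since A acts trivially on the free factor F, every element of T_z^r(y)
   has the same F-coordinate, namely f_y f_z^r.  Distinct elements of
   T_z^r(y) therefore differ only in their H-coordinate, an A-orbit in the
   finite group H, so xi_y(r) is bounded independently of r.  A bounded
   function cannot dominate c^r with c > 1, by Bernoulli's inequality and
   the Archimedean property.  Nothing about A beyond its finiteness is used. *)

From HB Require Import structures.
From mathcomp Require Import all_boot all_order all_algebra all_fingroup.
From mathcomp Require Import reals.
From mathcomp Require Import lra.
Import Order.TTheory GRing.Theory Num.Theory.

Local Open Scope ring_scope.

Section GrowthBound.

Variables (gT : finGroupType) (A : {group {perm gT}}) (z y : XX gT).

Lemma mem_Tzr_snd r x :
  x \in Tzr A z r y -> x.2 = iter r (Fmul^~ z.2) y.2.
Proof.
elim: r x => [|r IHr] x /=; first by rewrite inE => /eqP ->.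
case/flatten_mapP=> m m_in /mapP [a _ ->].
by rewrite /piX /mulG /repX /= (IHr m m_in).
Qed.

Lemma xi_le_card_set r : (xi A z y r <= #|{set gT}|)%N.
Proof.
pose w := iter r (Fmul^~ z.2) y.2.
rewrite /xi cardE -(size_map (pair^~ w) (enum _)).
apply: uniq_leq_size; first exact: undup_uniq.
move=> [S f]; rewrite mem_undup => /mem_Tzr_snd /= ->.
by apply: map_f; rewrite mem_enum.
Qed.

End GrowthBound.

Lemma bernoulli_inequality {R : realDomainType} (d : R) n :
  0 <= d -> 1 + n%:R * d <= (1 + d) ^+ n.
Proof.
move=> d_ge0; elim: n => [|n IHn]; first by rewrite mul0r addr0 expr0.
have nd_ge0 : 0 <= n%:R * d by rewrite mulr_ge0.
have : (1 + d) * (1 + n%:R * d) <= (1 + d) * (1 + d) ^+ n.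
  by rewrite ler_wpM2l //; lra.
rewrite exprS -natr1; nra.
Qed.

Lemma bounded_not_exp_growth (R : realType) {f : nat -> nat} {K : nat} :
  (forall r, (f r <= K)%N) -> ~ exp_growth R f.
Proof.
move=> f_le_K [c [c_gt1 [N c_le_f]]].
pose d := c - 1; have d_gt0 : 0 < d by rewrite subr_gt0.
pose b := Num.bound (K%:R / d).
have K_lt_bd : K%:R < b%:R * d.
  by rewrite -ltr_pdivrMr // archi_boundP // divr_ge0 // ltW.
have := c_le_f (N + b)%N (leq_addr _ _).
have -> : c = 1 + d by rewrite /d addrC subrK.
have := bernoulli_inequality d (N + b) (ltW d_gt0).
have := f_le_K (N + b)%N; rewrite -(ler_nat R) natrD.
have : 0 <= N%:R * d by rewrite mulr_ge0 // ltW.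
nra.
Qed.

Lemma xi_not_exp_growth (R : realType) (gT : finGroupType)
    (A : {group {perm gT}}) (z y : XX gT) :
  ~ exp_growth R (xi A z y).
Proof. exact: (bounded_not_exp_growth R (xi_le_card_set _ A z y)). Qed.

Theorem mainTheorem9 :
  (forall (R : realType) (gT : finGroupType) (A : {group {perm gT}}),
     A \subset Aut [set: gT] ->
     forall gz gy : GG gT,
       ~ exp_growth R (xi A (piX A gz) (piX A gy)))
  /\
  (forall (R : realType) (gy : GG Z3),
       ~ exp_growth R (xi A3 (piX A3 (h3, Fone)) (piX A3 gy))).
Proof.
split=> [R gT A _ gz gy | R gy]; exact: xi_not_exp_growth.
Qed.
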